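(* Let $\sqrt{D}=y_1\dots y_s$ be a primitive cycle (orientation string) of fixed length $s$. For a given digraph cycle $C$ of length $m$ (given by its orientation string), the following hold. (1) One can find the largest integer $R$ such that $\sqrt{D}^R\leq^* C$ in time $O(m)$ and space $O(\log m)$. (2) One can find the largest integer $R$ such that $\sigma^i(\sqrt{D})^R\leq^* C$ for some $i\in\{0,\dots,s-1\}$ in time $O(sm)$ and space $O(\log m)$. (3) For a given integer $r$, one can find the set $\Gamma$ of those $i\in\{0,\dots,s-1\}$ such that $\sigma^i(\sqrt{D})^r\,y_{i+1}\leq^* C$ in time $O(sm)$ and space $O(s\log s+\log m)$.
   Context: A digraph cycle $C=c_0c_1\dots c_{m-1}c_0$ is represented by its orientation string $x_1\dots x_m$ over $\{+,-,*\}$, where $x_k$ is $+$, $-$ or $*$ according as the edge $c_{k-1}c_k$ is a forward arc only, a backward arc only, or symmetric. For a string $Y$, $Y^R$ is the concatenation of $R$ copies of $Y$, and juxtaposition denotes concatenation. A string $Y$ is primitive if it is not $Z^r$ for any shorter string $Z$ and integer $r\ge2$. The shift $\sigma^i(y_1\dots y_s)=y_{i+1}\dots y_sy_1\dots y_i$, and subscripts of $y$ are taken mod $s$ in $\{1,\dots,s\}$. For strings $Y=z_1\dots z_p$ and $X=x_1\dots x_q$, $Y\leq^* X$ means there is a strictly increasing $\alpha:\{1,\dots,p\}\to\{1,\dots,q\}$ with $z_j\in\{x_{\alpha(j)},*\}$ for each $j$. Time and space refer to a standard (log-space/RAM) model of computation with the input read-only. *)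

From mathcomp Require Import all_boot.
Set Implicit Arguments. Unset Strict Implicit. Unset Printing Implicit Defensive.

Inductive sym := Plus | Minus | Star.

Definition spow (Y : seq sym) (R : nat) : seq sym := flatten (nseq R Y).

(* sigma^i(Y) = y_{i+1} ... y_s y_1 ... y_i  (mathcomp's rot) *)
Definition shift (i : nat) (Y : seq sym) : seq sym := rot i Y.

Definition primitive (Y : seq sym) : Prop :=
  forall (Z : seq sym) (r : nat), 2 <= r -> size Z < size Y -> Y <> spow Z r.

Definition leq_star (Y X : seq sym) : Prop :=
  exists alpha : nat -> nat,
    (forall j, j.+1 < size Y -> alpha j < alpha j.+1) /\
    (forall j, j < size Y ->
       alpha j < size X /\
       (nth Star Y j = nth Star X (alpha j) \/ nth Star Y j = Star)).

(* ---------- A unit-cost RAM with read-only input ----------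
   Input: the orientation string C (read-only, random access) and a
   read-only natural parameter p (only compared, never loaded).
   Registers hold naturals; space = total bit length of the registers
   used by the program; output is write-only and not counted. *)
Inductive instr :=
| IConst (d n : nat)
| IAdd (d a b : nat)
| ISub (d a b : nat)          (* r_d := r_a - r_b (truncated) *)
| IRead (d a : nat)           (* r_d := code of C[r_a] (0 if out of range) *)
| ILen (d : nat)
| IJmp (l : nat)
| IJlt (a b l : nat)
| IJltP (a l : nat)
| IJgtP (a l : nat)
| IOut (a : nat)
| IHalt.

Definition sym_code (x : sym) : nat :=
  match x with Plus => 1 | Minus => 2 | Star => 3 end.

Definition read_code (C : seq sym) (k : nat) : nat :=
  if k < size C then sym_code (nth Star C k) else 0.

Record config := Config { pc : nat; regs : nat -> nat; outp : seq nat }.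

Definition upd (f : nat -> nat) (d v : nat) : nat -> nat :=
  fun r => if r == d then v else f r.

Definition step (P : seq instr) (C : seq sym) (p : nat) (c : config)
  : option config :=
  let f := regs c in
  let nx := (pc c).+1 in
  match nth IHalt P (pc c) with
  | IConst d n => Some (Config nx (upd f d n) (outp c))
  | IAdd d a b => Some (Config nx (upd f d (f a + f b)) (outp c))
  | ISub d a b => Some (Config nx (upd f d (f a - f b)) (outp c))
  | IRead d a => Some (Config nx (upd f d (read_code C (f a))) (outp c))
  | ILen d => Some (Config nx (upd f d (size C)) (outp c))
  | IJmp l => Some (Config l f (outp c))
  | IJlt a b l => Some (Config (if f a < f b then l else nx) f (outp c))
  | IJltP a l => Some (Config (if f a < p then l else nx) f (outp c))
  | IJgtP a l => Some (Config (if p < f a then l else nx) f (outp c))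
  | IOut a => Some (Config nx f (rcons (outp c) (f a)))
  | IHalt => None
  end.

Fixpoint steps (P : seq instr) (C : seq sym) (p : nat) (t : nat) (c : config)
  : option config :=
  match t with
  | 0 => Some c
  | t'.+1 => obind (step P C p) (steps P C p t' c)
  end.

Definition init_config : config := Config 0 (fun _ => 0) [::].

Definition instr_maxreg (i : instr) : nat :=
  match i with
  | IConst d _ | IRead d _ | ILen d => d
  | IAdd d a b | ISub d a b => maxn d (maxn a b)
  | IJlt a b _ => maxn a b
  | IJltP a _ | IJgtP a _ | IOut a => a
  | IJmp _ | IHalt => 0
  end.

Definition nregs (P : seq instr) : nat := (\max_(i <- P) instr_maxreg i).+1.

(* bit length of a natural number (at least 1) *)
Definition bitlen (n : nat) : nat := (trunc_log 2 n).+1.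

Definition space (P : seq instr) (c : config) : nat :=
  \sum_(r < nregs P) bitlen (regs c r).

Definition runs_within (P : seq instr) (C : seq sym) (p T Sp : nat)
  (res : seq nat) : Prop :=
  exists t cf,
    [/\ t <= T, steps P C p t init_config = Some cf,
        step P C p cf = None, outp cf = res &
        forall t' cf', t' <= t -> steps P C p t' init_config = Some cf' ->
          space P cf' <= Sp].

From mathcomp Require Import all_boot zify.
Set Implicit Arguments. Unset Strict Implicit. Unset Printing Implicit Defensive.

(* Whether [Y <=* X] holds is decided by greedy left-to-right matching.  For a
   power of a rotation [rot i D] this means scanning [C] once against the
   periodic stream [rot i D] [rot i D] ...: if the scan consumes [G_i] symbols
   of the stream, then [(rot i D)^R <=* C] iff [R * |D| <= G_i], and
   [(rot i D)^r y_(i+1) <=* C] iff [r * |D| < G_i].  A RAM program with the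
   symbols of [rot i D] hard-wired into its code performs this scan in [O(m)]
   steps, keeping [G_i] as its quotient and remainder by [|D|], numbers of
   [O(log m)] bits; parts (2) and (3) run the [s] scans one after the other. *)

(** * Greedy embedding *)

Definition sym_match (y x : sym) : bool :=
  match y, x with
  | Star, _ | Plus, Plus | Minus, Minus => true
  | _, _ => false
  end.

Lemma sym_matchP y x : sym_match y x <-> y = x \/ y = Star.
Proof. by case: y; case: x; split=> //=; intuition discriminate. Qed.

Fixpoint embedb (Y X : seq sym) : bool :=
  match Y, X with
  | [::], _ => true
  | _ :: _, [::] => false
  | y :: Y', x :: X' => if sym_match y x then embedb Y' X' else embedb Y X'
  end.

Lemma leq_star_nil X : leq_star [::] X.
Proof. by exists id; split. Qed.

Lemma leq_star_nilr y Y : ~ leq_star (y :: Y) [::].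
Proof. by case=> a [_ /(_ 0 erefl) []]. Qed.

Lemma leq_star_cons y Y x X :
  sym_match y x -> leq_star Y X -> leq_star (y :: Y) (x :: X).
Proof.
move=> /sym_matchP yx [a [a_incr a_ok]].
exists (fun j => if j is j'.+1 then (a j').+1 else 0); split=> [[|j] //= /a_incr|[|j]] //.
by move=> /a_ok.
Qed.

Lemma leq_star_consr Y x X : leq_star Y X -> leq_star Y (x :: X).
Proof.
move=> [a [a_incr a_ok]]; exists (fun j => (a j).+1); split=> [j /a_incr|j /a_ok] //.
Qed.

Lemma leq_star_behead y Y X : leq_star (y :: Y) X -> leq_star Y X.
Proof.
move=> [a [a_incr a_ok]]; exists (fun j => a j.+1); split=> j Hj.
  exact: (a_incr j.+1).
exact: (a_ok j.+1).
Qed.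

Lemma leq_star_consE y Y x X : leq_star (y :: Y) (x :: X) ->
  (sym_match y x /\ leq_star Y X) \/ leq_star (y :: Y) X.
Proof.
move=> [a [a_incr a_ok]].
have a_ge j : j < size (y :: Y) -> a 0 + j <= a j.
  elim: j => [|j IH] Hj; first by rewrite addn0.
  by have := a_incr j Hj; have := IH (ltnW Hj); lia.
case a0: (a 0) => [|k].
  have [_ /= h] := a_ok 0 erefl; rewrite a0 /= in h.
  left; split; first exact/sym_matchP.
  exists (fun j => (a j.+1).-1); split=> j Hj.
    by have := a_incr j.+1 Hj; have := a_ge j.+1 (ltnW Hj); lia.
  have := a_ge j.+1 Hj; have [] := a_ok j.+1 Hj; case: (a j.+1) => [|m] //=.
  lia.
right; exists (fun j => (a j).-1); split=> j Hj.
  by have := a_incr j Hj; have := a_ge j (ltnW Hj); lia.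
have := a_ge j Hj; have [] := a_ok j Hj; case: (a j) => [|m] //=.
lia.
Qed.

Lemma leq_starP Y X : leq_star Y X <-> embedb Y X.
Proof.
elim: X Y => [|x X IH] [|y Y] //=; try by split=> // _; apply: leq_star_nil.
  by split=> // /leq_star_nilr.
case yx: (sym_match y x); rewrite -IH; split.
- by case/leq_star_consE=> [[] //|/leq_star_behead].
- exact: leq_star_cons.
- by case/leq_star_consE=> [[]|]; rewrite ?yx.
- exact: leq_star_consr.
Qed.

(** * Greedy scan against a periodic pattern *)

Fixpoint greedy_end (f : nat -> sym) (n : nat) (X : seq sym) : nat :=
  if X is x :: X' then greedy_end f (n + sym_match (f n) x) X' else n.

Lemma greedy_end_ge f n X : n <= greedy_end f n X.
Proof. by elim: X n => [|x X IH] n //=; apply: leq_trans (leq_addr _ _) (IH _). Qed.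

Lemma greedy_end_le f n X : greedy_end f n X <= n + size X.
Proof.
elim: X n => [|x X IH] n /=; first by rewrite addn0.
by have := IH (n + sym_match (f n) x); case: sym_match => /=; lia.
Qed.

Lemma embedb_stream f n k X :
  embedb (map f (iota n k)) X = (n + k <= greedy_end f n X).
Proof.
elim: X n k => [|x X IH] n [|k] /=.
- by rewrite addn0 leqnn.
- by rewrite addnS ltnNge leq_addr.
- by rewrite addn0 (leq_trans (leq_addr _ _) (greedy_end_ge _ _ _)).
- case: (sym_match (f n) x); first by rewrite IH addn1 addSnnS.
  by rewrite addn0 -IH.
Qed.

Definition periodic (W : seq sym) (t : nat) : sym := nth Star W (t %% size W).

Lemma spow_periodic W R :
  0 < size W -> spow W R = map (periodic W) (iota 0 (R * size W)).
Proof.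
move=> W0; elim: R => [|R IH] //.
rewrite /spow /= -/(spow W R) IH mulSn iotaD add0n.
have -> : iota (size W) (R * size W) = map (addn (size W)) (iota 0 (R * size W)).
  by rewrite -iotaDl addn0.
rewrite map_cat -map_comp; congr (_ ++ _).
  rewrite -[LHS](mkseq_nth Star) /mkseq; apply/eq_in_map => t.
  by rewrite mem_iota => /andP[_ t_lt]; rewrite /periodic modn_small.
by apply: eq_map => t /=; rewrite /periodic modnDl.
Qed.

Lemma leq_star_spow W R X : 0 < size W ->
  leq_star (spow W R) X <-> R <= greedy_end (periodic W) 0 X %/ size W.
Proof. by move=> W0; rewrite leq_starP spow_periodic // embedb_stream leq_divRL. Qed.

Definition max_power D C i := greedy_end (periodic (rot i D)) 0 C %/ size D.

Definition extendable D C r i := r * size D < greedy_end (periodic (rot i D)) 0 C.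

Lemma max_power_le D C i : max_power D C i <= size C.
Proof. exact: leq_trans (leq_div _ _) (greedy_end_le _ _ _). Qed.

Lemma leq_star_spow_rot D C i R : 0 < size D ->
  leq_star (spow (rot i D) R) C <-> R <= max_power D C i.
Proof. by move=> D0; rewrite leq_star_spow size_rot. Qed.

Lemma leq_star_spow_rot_cat D C i r : i < size D ->
  leq_star (spow (rot i D) r ++ [:: nth Star D i]) C <-> extendable D C r i.
Proof.
move=> iD; have rotD0 : 0 < size (rot i D) by rewrite size_rot; lia.
rewrite leq_starP spow_periodic // size_rot.
have -> : [:: nth Star D i] = map (periodic (rot i D)) (iota (r * size D) 1).
  by rewrite /= /periodic size_rot modnMl nth_cat size_drop subn_gt0 iD nth_drop addn0.
by rewrite -map_cat -iotaD embedb_stream addn1.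
Qed.

Lemma max_power_bigmax D C k (R := \max_(i < k) max_power D C i) :
  0 < size D -> 0 < k ->
  (exists2 i, i < k & leq_star (spow (rot i D) R) C) /\
  (forall i R', i < k -> leq_star (spow (rot i D) R') C -> R' <= R).
Proof.
move=> D0 k0; split.
  have [i ->] : {i : 'I_k | R = max_power D C i} by apply: eq_bigmax; rewrite card_ord.
  by exists i => //; rewrite leq_star_spow_rot.
move=> i R' i_lt; rewrite leq_star_spow_rot // => /leq_trans; apply.
by rewrite /R (bigD1 (Ordinal i_lt)) //= leq_maxl.
Qed.

Lemma divmodS_lt s n : (n %% s).+1 < s ->
  n.+1 %/ s = n %/ s /\ n.+1 %% s = (n %% s).+1.
Proof.
move=> lt_s; have s0 : 0 < s by lia.
have -> : n.+1 = n %/ s * s + (n %% s).+1 by rewrite addnS -divn_eq.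
by rewrite divnMDl // (divn_small lt_s) addn0 modnMDl (modn_small lt_s).
Qed.

Lemma divmodS_wrap s n : 0 < s -> (n %% s).+1 = s ->
  n.+1 %/ s = (n %/ s).+1 /\ n.+1 %% s = 0.
Proof.
move=> s0 eq_s.
have -> : n.+1 = (n %/ s).+1 * s by rewrite mulSn -{1}eq_s addSn addnC -divn_eq.
by rewrite mulnK // modnMl.
Qed.

Lemma ltn_mul_divmod r s m : 0 < s ->
  (r * s < m) = (r < m %/ s) || ((r == m %/ s) && (0 < m %% s)).
Proof.
move=> s0; rewrite {1}(divn_eq m s); have := ltn_pmod m s0.
move: (m %/ s) (m %% s) => q t t_lt.
case: (ltngtP r q) => [r_lt|r_gt|->] /=.
- by apply/idP; nia.
- by apply/negbTE; nia.
- by apply/idP/idP; rewrite ?ltnn ?eqxx /=; lia.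
Qed.

Lemma bitlen_le n k : 0 < k -> n < 2 ^ k -> bitlen n <= k.
Proof.
move=> k0; case: n => [|n] n_lt; first by rewrite /bitlen trunc_log0.
have := leq_ltn_trans (trunc_logP (isT : 1 < 2) (ltn0Sn n)) n_lt.
by rewrite ltn_exp2l.
Qed.

Lemma bitlenD a b : bitlen (a + b) <= bitlen a + bitlen b.
Proof.
have [a_lt b_lt] := (trunc_log_ltn a (isT : 1 < 2), trunc_log_ltn b (isT : 1 < 2)).
apply: bitlen_le; first by rewrite addn_gt0.
rewrite expnS in a_lt; rewrite expnS in b_lt; rewrite /bitlen expnD !expnS.
have [pa pb] : 0 < 2 ^ trunc_log 2 a /\ 0 < 2 ^ trunc_log 2 b by rewrite !expn_gt0.
nia.
Qed.

(** * Runs of the machine *)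

Lemma steps_add P C p a b c :
  steps P C p (a + b) c = obind (steps P C p b) (steps P C p a c).
Proof.
elim: b => [|b IH] /=; first by rewrite addn0; case: (steps _ _ _ a c).
by rewrite addnS /= IH; case: (steps P C p a c).
Qed.

Lemma runs_within_mono P C p T T' Sp Sp' res : T <= T' -> Sp <= Sp' ->
  runs_within P C p T Sp res -> runs_within P C p T' Sp' res.
Proof.
move=> TT' SS' [t [cf [tT run halt out space_ok]]]; exists t, cf; split=> //.
  exact: leq_trans TT'.
by move=> t' cf' t't /(space_ok _ _ t't) /leq_trans; apply.
Qed.

Lemma sym_code_le3 x : sym_code x <= 3.
Proof. by case: x. Qed.

Lemma updE f d v r : upd f d v r = if r == d then v else f r.
Proof. by []. Qed.

Section Reach.
Variables (P : seq instr) (C : seq sym) (p B : nat).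

Definition regs_le (f : nat -> nat) := forall r, f r <= B.

Lemma regs_le_upd f d v : regs_le f -> v <= B -> regs_le (upd f d v).
Proof. by move=> fB vB r; rewrite /upd; case: (r == d). Qed.

(* Bounding the registers all along the run is what gives the space bound. *)
Definition reach (c : config) (n : nat) (Q : config -> Prop) :=
  exists k c', [/\ k <= n, steps P C p k c = Some c', Q c' &
    forall k' c'', k' <= k -> steps P C p k' c = Some c'' -> regs_le (regs c'')].

Lemma reach_now c n (Q : config -> Prop) : regs_le (regs c) -> Q c -> reach c n Q.
Proof. by move=> cB Qc; exists 0, c; split=> // -[|//] c'' _ [<-]. Qed.

Lemma reach_mono c n n' Q : n <= n' -> reach c n Q -> reach c n' Q.
Proof. by move=> nn' [k [c' [kn]]]; exists k, c'; split=> //; apply: leq_trans nn'. Qed.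

Lemma reach_weaken c n (Q1 Q2 : config -> Prop) :
  (forall c', Q1 c' -> Q2 c') -> reach c n Q1 -> reach c n Q2.
Proof. by move=> Q12 [k [c' [kn run /Q12]]]; exists k, c'. Qed.

Lemma reach_step c c1 n Q : step P C p c = Some c1 -> regs_le (regs c) ->
  reach c1 n Q -> reach c n.+1 Q.
Proof.
move=> step_c cB [k [c' [kn run Qc' run_bd]]]; exists k.+1, c'.
split=> //; first by rewrite -addn1 addnC steps_add /= step_c.
move=> [|k'] c''; first by move=> _ [<-].
by rewrite -addn1 addnC steps_add /= step_c => k'k; apply: run_bd.
Qed.

Lemma reach_seq c n1 n2 Q1 Q :
  reach c n1 Q1 -> (forall c1, regs_le (regs c1) -> Q1 c1 -> reach c1 n2 Q) ->
  reach c (n1 + n2) Q.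
Proof.
move=> [k1 [c1 [k1n run1 Qc1 bd1]]] /(_ c1 (bd1 _ _ (leqnn _) run1) Qc1).
move=> [k2 [c2 [k2n run2 Qc2 bd2]]]; exists (k1 + k2), c2; split.
- exact: leq_add.
- by rewrite steps_add run1.
- done.
move=> k' c''; case: (leqP k' k1) => [k'k1 _|k1k']; first exact: bd1.
by rewrite -(subnKC (ltnW k1k')) steps_add run1 /= leq_add2l; apply: bd2.
Qed.

Lemma reach_iter (Inv : nat -> config -> Prop) N T :
  (forall k c, k < N -> regs_le (regs c) -> Inv k c -> reach c T (Inv k.+1)) ->
  forall c, regs_le (regs c) -> Inv 0 c -> reach c (N * T) (Inv N).
Proof.
move=> body; suff loop d k c : k + d = N -> regs_le (regs c) -> Inv k c ->
    reach c (d * T) (Inv N) by move=> c; apply: loop.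
elim: d k c => [|d IH] k c; first by rewrite addn0 => <-; apply: reach_now.
move=> kdN cB Inv_c; rewrite mulSn.
apply: reach_seq (body k c _ cB Inv_c) _; first lia.
by move=> c1 c1B Inv_c1; apply: IH c1B Inv_c1; rewrite addSnnS.
Qed.

Lemma space_le c : regs_le (regs c) -> space P c <= nregs P * bitlen B.
Proof.
move=> cB; apply: (@leq_trans (\sum_(r < nregs P) bitlen B)).
  by apply: leq_sum => r _; rewrite /bitlen ltnS leq_trunc_log.
by rewrite sum_nat_const card_ord.
Qed.

Lemma reach_runs_within T Sp res :
  reach init_config T (fun c => step P C p c = None /\ outp c = res) ->
  nregs P * bitlen B <= Sp -> runs_within P C p T Sp res.
Proof.
move=> [k [cf [kT run [halt out] bd]]] SpB; exists k, cf; split=> //.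
by move=> t' cf' t'k /(bd _ _ t'k) /space_le /leq_trans; apply.
Qed.

End Reach.

Definition reg_bound (D C : seq sym) := size C + size D + 3.

Lemma bitlen_reg_bound D C :
  bitlen (reg_bound D C) <= (bitlen (size D + 3)).+1 * bitlen (size C).
Proof.
rewrite /reg_bound -addnA; apply: leq_trans (bitlenD _ _) _.
by rewrite mulSn leq_add2l leq_pmulr.
Qed.

Lemma space_reg_bound P D C c : nregs P * (bitlen (size D + 3)).+1 <= c ->
  nregs P * bitlen (reg_bound D C) <= c * bitlen (size C).
Proof.
move=> Pc; apply: leq_trans (leq_mul (leqnn _) (bitlen_reg_bound D C)) _.
by rewrite mulnA leq_mul2r Pc orbT.
Qed.

Ltac bounds :=
  rewrite /= ?updE /=; repeat apply: regs_le_upd; rewrite ?/reg_bound; (done || lia).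
(* One machine step: [fetch] rewrites the instruction at the current pc, and
   [simp] must resolve the register tests so that the step yields a concrete
   configuration. *)
Ltac exec_with fetch simp :=
  apply: reach_step; [rewrite /step (fetch) /=; [simp; reflexivity | lia ..] | bounds | ].
Ltac exec fetch := exec_with fetch idtac.

(** * The scanning program *)

(* Register use: 1 holds [|C|], 6 and 7 hold 1 and 2 (the codes of [Plus] and
   [Minus]), and 0 is never written.  While segment [i] scans [C] against
   [rot i D], 2 is the read position, 3 and 4 are the quotient and remainder by
   [|D|] of the position in the stream, and 5 is the code of the symbol read;
   block [j] of the segment tries to match the [j]-th symbol of [rot i D]. *)
Section Program.
Variables (D : seq sym) (nseg : nat) (post : nat -> nat -> instr) (fin : instr).

Definition seg_len := 9 * size D + 9.
Definition seg_start i := 3 + i * seg_len.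
Definition block_start i j := seg_start i + 3 + j * 9.
Definition seg_exit i := block_start i (size D).

Definition prelude := [:: ILen 1; IConst 6 1; IConst 7 2].

Definition block_code i j o : instr :=
  let b := block_start i j in
  let d := nth Star (rot i D) j in
  match o with
  | 0 => IJlt 2 1 (b + 2)
  | 1 => IJmp (seg_exit i)
  | 2 => IRead 5 2
  | 3 => IAdd 2 2 6
  | 4 => match d with Star => IJmp (b + 6) | Plus => IJlt 5 6 b | Minus => IJlt 5 7 b end
  | 5 => match d with Star => IHalt | Plus => IJlt 6 5 b | Minus => IJlt 7 5 b end
  | 6 => if j.+1 < size D then IAdd 4 4 6 else IConst 4 0
  | 7 => if j.+1 < size D then IJmp (block_start i j.+1) else IAdd 3 3 6
  | _ => IJmp (block_start i 0)
  end.

Definition seg_code i o : instr :=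
  if o < 3 then IConst o.+2 0
  else if o < 3 + size D * 9 then block_code i ((o - 3) %/ 9) ((o - 3) %% 9)
  else post i (o - (3 + size D * 9)).

Definition prog_at q : instr :=
  if q < 3 then nth IHalt prelude q
  else if q - 3 < nseg * seg_len then seg_code ((q - 3) %/ seg_len) ((q - 3) %% seg_len)
  else fin.

Definition seg_prog := mkseq prog_at (seg_start nseg).+1.

Lemma fetch_prelude q : q < 3 -> nth IHalt seg_prog q = nth IHalt prelude q.
Proof. by move=> q3; rewrite nth_mkseq ?(leq_trans q3) // /prog_at q3. Qed.

Lemma fetch_seg i o q : i < nseg -> o < seg_len -> q = seg_start i + o ->
  nth IHalt seg_prog q = seg_code i o.
Proof.
move=> i_lt o_lt ->.
have i_le : i.+1 * seg_len <= nseg * seg_len by rewrite leq_mul2r i_lt orbT.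
rewrite nth_mkseq /seg_start /prog_at; last by lia.
case: ifP => [_|]; last lia.
by rewrite -addnA addKn divnMDl ?divn_small ?addn0 ?modnMDl ?modn_small //; lia.
Qed.

Lemma fetch_init i o q : i < nseg -> o < 3 -> q = seg_start i + o ->
  nth IHalt seg_prog q = IConst o.+2 0.
Proof.
by move=> i_lt o_lt q_eq; rewrite (fetch_seg i_lt _ q_eq) /seg_code ?o_lt // /seg_len; lia.
Qed.

Lemma fetch_block i j o q : i < nseg -> j < size D -> o < 9 ->
  q = block_start i j + o -> nth IHalt seg_prog q = block_code i j o.
Proof.
move=> i_lt j_lt o_lt q_eq; rewrite (@fetch_seg i (3 + j * 9 + o)) //; first last.
- by rewrite q_eq /block_start; lia.
- by rewrite /seg_len; lia.
rewrite /seg_code; case: ifP => [_|]; last lia.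
by rewrite -addnA addKn divnMDl ?divn_small ?addn0 ?modnMDl ?modn_small.
Qed.

Lemma fetch_post i o q : i < nseg -> o < 6 -> q = seg_exit i + o ->
  nth IHalt seg_prog q = post i o.
Proof.
move=> i_lt o_lt q_eq; rewrite (@fetch_seg i (3 + size D * 9 + o)) //; first last.
- by rewrite q_eq /seg_exit /block_start; lia.
- by rewrite /seg_len; lia.
by rewrite /seg_code; case: ifP => [|_]; [lia | rewrite addKn].
Qed.

Lemma fetch_fin : nth IHalt seg_prog (seg_start nseg) = fin.
Proof. by rewrite nth_mkseq // /prog_at /seg_start; case: ifP => //; lia. Qed.

Lemma fetch_end : nth IHalt seg_prog (seg_start nseg).+1 = IHalt.
Proof. by rewrite nth_default // size_mkseq. Qed.

Variables (C : seq sym) (p : nat).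
Hypothesis D0 : 0 < size D.

Local Notation run := (reach seg_prog C p (reg_bound D C)).
Local Notation bounded := (regs_le (reg_bound D C)).

Definition fixed_regs (f : nat -> nat) := [/\ f 1 = size C, f 6 = 1 & f 7 = 2].

Definition scan_regs pos n (f : nat -> nat) :=
  [/\ f 2 = pos, f 3 = n %/ size D & f 4 = n %% size D].

Definition agree_off_scan (f g : nat -> nat) := forall r, (r < 2) || (5 < r) -> g r = f r.

Lemma agree_off_scan_upd f g d v :
  agree_off_scan f g -> 2 <= d <= 5 -> agree_off_scan f (upd g d v).
Proof. by move=> fg d_scan r r_out; rewrite /upd ifF ?fg //; lia. Qed.

Lemma agree_off_scan_trans f g h :
  agree_off_scan f g -> agree_off_scan g h -> agree_off_scan f h.
Proof. by move=> fg gh r r_out; rewrite gh ?fg. Qed.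

Lemma fixed_regs_agree f g : fixed_regs f -> agree_off_scan f g -> fixed_regs g.
Proof. by move=> [f1 f6 f7] fg; split; rewrite fg. Qed.

Lemma test_symbol i j x q g o n Q : q = block_start i j + 4 ->
  i < nseg -> j < size D -> bounded g ->
  g 5 = sym_code x -> g 6 = 1 -> g 7 = 2 ->
  run (Config (if sym_match (nth Star (rot i D) j) x then block_start i j + 6
               else block_start i j) g o) n Q ->
  run (Config q g o) n.+2 Q.
Proof.
move=> -> i_lt j_lt gB g5 g6 g7.
case d_eq: (nth Star (rot i D) j); case: x g5 => g5 /= cont.
all: exec_with (@fetch_block i j 4) ltac:(rewrite /block_code d_eq /= ?g5 ?g6 ?g7 /=).
all: try by apply: reach_mono cont.
all: exec_with (@fetch_block i j 5) ltac:(rewrite /block_code d_eq /= ?g5 ?g6 ?g7 /=).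
all: by rewrite -?addnS.
Qed.

Lemma advance_counter i n q g o : q = block_start i (n %% size D) + 6 ->
  i < nseg -> bounded g -> g 6 = 1 ->
  g 3 = n %/ size D -> g 4 = n %% size D -> n < size C ->
  run (Config q g o) 3
    (fun c => exists2 g', c = Config (block_start i (n.+1 %% size D)) g' o &
       [/\ g' 2 = g 2, g' 3 = n.+1 %/ size D, g' 4 = n.+1 %% size D
         & agree_off_scan g g']).
Proof.
move=> -> i_lt gB g6 g3 g4 nC; set j := n %% size D.
have j_lt : j < size D by rewrite ltn_mod.
have q_le : n %/ size D <= n := leq_div n (size D).
case: (ltnP j.+1 (size D)) => [jS_lt | jS_ge].
- have [-> ->] := divmodS_lt jS_lt.
  exec_with (@fetch_block i j 6) ltac:(rewrite /block_code jS_lt).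
  exec_with (@fetch_block i j 7) ltac:(rewrite /block_code jS_lt).
  apply: reach_now; first by bounds.
  exists (upd g 4 (g 4 + g 6)) => //; rewrite !updE /= g4 g6 addn1.
  by split=> //; apply: agree_off_scan_upd.
- have jS_eq : j.+1 = size D by lia.
  have [-> ->] := divmodS_wrap D0 jS_eq.
  have jS_F : j.+1 < size D = false by rewrite jS_eq ltnn.
  exec_with (@fetch_block i j 6) ltac:(rewrite /block_code jS_F).
  exec_with (@fetch_block i j 7) ltac:(rewrite /block_code jS_F).
  exec (@fetch_block i j 8).
  apply: reach_now; first by bounds.
  exists (upd (upd g 4 0) 3 (upd g 4 0 3 + upd g 4 0 6)) => //.
  rewrite !updE /= g3 g6 addn1; split=> //.
  by apply: agree_off_scan_upd => //; apply: agree_off_scan_upd.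
Qed.

Lemma block_step i pos n f o : i < nseg -> bounded f -> fixed_regs f ->
  scan_regs pos n f -> n <= pos -> pos < size C ->
  let n' := n + sym_match (periodic (rot i D) n) (nth Star C pos) in
  run (Config (block_start i (n %% size D)) f o) 8
    (fun c => exists2 g, c = Config (block_start i (n' %% size D)) g o &
                         scan_regs pos.+1 n' g /\ agree_off_scan f g).
Proof.
move=> i_lt fB [f1 f6 f7] [f2 f3 f4] n_le pos_lt n'; set j := n %% size D.
have j_lt : j < size D by rewrite ltn_mod.
have x_le := sym_code_le3 (nth Star C pos).
exec_with (@fetch_block i j 0) ltac:(rewrite f1 f2 pos_lt).
exec_with (@fetch_block i j 2) ltac:(rewrite f2 /read_code pos_lt).
exec (@fetch_block i j 3).
set g := upd (upd f 5 _) 2 _.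
have gB : bounded g by rewrite /g; bounds.
have fg : agree_off_scan f g.
  by apply: agree_off_scan_upd => //; apply: agree_off_scan_upd.
have [g6 g7] : g 6 = 1 /\ g 7 = 2 by rewrite !fg.
apply: (@test_symbol i j (nth Star C pos)) => //; first lia.
have -> : nth Star (rot i D) j = periodic (rot i D) n by rewrite /periodic size_rot.
rewrite /n'; case: ifP => matched.
- apply: reach_weaken (@advance_counter i n _ _ _ _ i_lt gB g6 _ _ _) => //; last by lia.
  move=> c [g' -> [g'2 g'3 g'4 gg']]; rewrite addn1; exists g' => //.
  split; last exact: agree_off_scan_trans fg gg'.
  by split; rewrite // g'2 /g !updE /= f2 f6 addn1.
- apply: reach_now => //; rewrite addn0; exists g => //.
  by split=> //; split; rewrite /g !updE /= ?f2 ?f3 ?f4 ?f6 ?addn1.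
Qed.

Definition scan_done i o m f (c : config) :=
  exists2 g, c = Config (seg_exit i) g o & scan_regs (size C) m g /\ agree_off_scan f g.

Lemma scan i pos n f o : i < nseg -> bounded f -> fixed_regs f ->
  scan_regs pos n f -> n <= pos <= size C ->
  run (Config (block_start i (n %% size D)) f o) (2 + 9 * (size C - pos))
    (scan_done i o (greedy_end (periodic (rot i D)) n (drop pos C)) f).
Proof.
move=> i_lt; move: {2}(size C - pos) (erefl (size C - pos)) => d.
elim: d pos n f => [|d IH] pos n f d_eq fB f_fix f_scan /andP[n_le pos_le].
  have pos_eq : pos = size C by lia.
  have j_lt : n %% size D < size D by rewrite ltn_mod.
  have [[f1 _ _] [f2 _ _]] := (f_fix, f_scan); rewrite d_eq.
  exec_with (@fetch_block i (n %% size D) 0) ltac:(rewrite f1 f2 pos_eq ltnn).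
  exec (@fetch_block i (n %% size D) 1).
  apply: reach_now => //; exists f; rewrite // pos_eq drop_size /=.
  by rewrite -pos_eq.
have pos_lt : pos < size C by lia.
rewrite (drop_nth Star pos_lt) /=.
apply: (reach_mono _ (reach_seq (block_step o i_lt fB f_fix f_scan n_le pos_lt)
  (n2 := 2 + 9 * (size C - pos.+1)) _)); first lia.
move=> c gB [g c_eq [g_scan fg]]; subst c.
have rest : size C - pos.+1 = d by lia.
have range : n + sym_match (periodic (rot i D) n) (nth Star C pos) <= pos.+1 <= size C.
  by case: sym_match; lia.
apply: reach_weaken (IH _ _ _ rest gB (fixed_regs_agree f_fix fg) g_scan range).
move=> c' [h -> [h_scan gh]]; exists h => //.
by split=> //; apply: agree_off_scan_trans fg gh.
Qed.

Lemma run_segment i f o : i < nseg -> bounded f -> fixed_regs f ->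
  run (Config (seg_start i) f o) (5 + 9 * size C)
    (scan_done i o (greedy_end (periodic (rot i D)) 0 C) f).
Proof.
move=> i_lt fB f_fix.
exec (@fetch_init i 0); exec (@fetch_init i 1); exec (@fetch_init i 2).
have -> : (seg_start i).+3 = block_start i (0 %% size D) by rewrite mod0n /block_start; lia.
set g := upd (upd (upd f 2 0) 3 0) 4 0.
have fg : agree_off_scan f g by do 3 (apply: agree_off_scan_upd; last done).
have gB : bounded g by rewrite /g; bounds.
have g_scan : scan_regs 0 0 g by split; rewrite /g !updE /= ?div0n ?mod0n.
have := scan o i_lt gB (fixed_regs_agree f_fix fg) g_scan (leq0n _).
rewrite subn0 drop0 => /reach_weaken; apply=> c [h -> [h_scan gh]].
by exists h => //; split=> //; apply: agree_off_scan_trans fg gh.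
Qed.

Definition init_regs := upd (upd (upd (fun=> 0) 1 (size C)) 6 1) 7 2.

Lemma run_prelude n Q :
  run (Config (seg_start 0) init_regs [::]) n Q -> run init_config (3 + n) Q.
Proof.
move=> cont.
exec (@fetch_prelude 0); exec (@fetch_prelude 1); exec (@fetch_prelude 2).
exact: cont.
Qed.

End Program.

(** * The three programs *)

(* Register 8 holds the maximum so far; [IAdd 8 3 0] copies register 3. *)
Definition max_post D i o : instr :=
  match o with
  | 0 => IJlt 8 3 (seg_exit D i + 2)
  | 2 => IAdd 8 3 0
  | _ => IJmp (seg_start D i.+1)
  end.

Definition max_prog D k := seg_prog D k (max_post D) (IOut 8).

Section MaxProgram.
Variables (D C : seq sym) (k : nat).
Hypothesis D0 : 0 < size D.

Local Notation run := (reach (max_prog D k) C 0 (reg_bound D C)).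
Local Notation bounded := (regs_le (reg_bound D C)).
Local Notation fetch i o := (@fetch_post D k (max_post D) (IOut 8) i o).
Local Notation segment i f := (@run_segment D k (max_post D) (IOut 8) C 0 D0 i f [::]).

Definition max_inv j (c : config) := exists2 g, c = Config (seg_start D j) g [::] &
  [/\ fixed_regs C g, g 0 = 0 & g 8 = \max_(i < j) max_power D C i].

Lemma max_segment j c : j < k -> bounded (regs c) -> max_inv j c ->
  run c (5 + 9 * size C + 3) (max_inv j.+1).
Proof.
move=> j_lt cB [g c_eq [g_fix g0 g8]]; subst c.
have maxS : \max_(i < j.+1) max_power D C i = maxn (g 8) (max_power D C j).
  by rewrite big_ord_recr g8.
apply: reach_seq (segment j g j_lt cB g_fix) _.
move=> c1 hB [h c1_eq [[_ h3 _] gh]]; subst c1; rewrite -/(max_power D C j) in h3.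
have [h_fix h0 h8] : [/\ fixed_regs C h, h 0 = 0 & h 8 = g 8].
  by split; [exact: fixed_regs_agree g_fix gh | rewrite gh | rewrite gh].
have hmax := max_power_le D C j.
exec_with (fetch j 0) ltac:(rewrite /max_post).
case: ifP => [lt_max | ge_max].
- exec_with (fetch j 2) ltac:(rewrite /max_post).
  exec_with (fetch j 3) ltac:(rewrite /max_post).
  apply: reach_now; first by bounds.
  exists (upd h 8 (h 3 + h 0)) => //; rewrite !updE /= maxS.
  by split=> //; rewrite h3 h0 addn0; lia.
- exec_with (fetch j 1) ltac:(rewrite /max_post).
  by apply: reach_now => //; exists h => //; split=> //; rewrite maxS; lia.
Qed.

Lemma max_prog_run : 0 < k ->
  runs_within (max_prog D k) C 0 (3 + (k * (5 + 9 * size C + 3) + 1))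
    (nregs (max_prog D k) * bitlen (reg_bound D C)) [:: \max_(i < k) max_power D C i].
Proof.
move=> k0; apply: reach_runs_within => //; apply: run_prelude => //.
apply: reach_seq (reach_iter max_segment _ _) _.
- by rewrite /init_regs; bounds.
- by exists (init_regs C) => //; split; rewrite ?big_ord0.
- move=> c1 gB [g c1_eq [g_fix g0 g8]]; subst c1.
  exec (@fetch_fin D k (max_post D) (IOut 8)).
  apply: reach_now => //; split; last by rewrite /= g8.
  by rewrite /step (@fetch_end D k (max_post D) (IOut 8)).
Qed.

End MaxProgram.

(* With [q] and [t] in registers 3 and 4, [r * |D| < q * |D| + t] iff [r < q],
   or [r = q] and [0 < t]. *)
Definition filter_post D i o : instr :=
  match o with
  | 0 => IJltP 3 (seg_start D i.+1)
  | 1 => IJgtP 3 (seg_exit D i + 3)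
  | 2 => IJlt 4 6 (seg_start D i.+1)
  | 3 => IConst 9 i
  | 4 => IOut 9
  | _ => IJmp (seg_start D i.+1)
  end.

Definition filter_prog D := seg_prog D (size D) (filter_post D) IHalt.

Section FilterProgram.
Variables (D C : seq sym) (r : nat).
Hypothesis D0 : 0 < size D.

Local Notation run := (reach (filter_prog D) C r (reg_bound D C)).
Local Notation bounded := (regs_le (reg_bound D C)).
Local Notation fetch i o := (@fetch_post D (size D) (filter_post D) IHalt i o).
Local Notation segment i f o := (@run_segment D (size D) (filter_post D) IHalt C r D0 i f o).

Definition filter_inv j (c : config) :=
  exists2 g, c = Config (seg_start D j) g [seq i <- iota 0 j | extendable D C r i] &
  fixed_regs C g.

Lemma filter_segment j c : j < size D -> bounded (regs c) -> filter_inv j c ->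
  run c (5 + 9 * size C + 6) (filter_inv j.+1).
Proof.
move=> j_lt cB [g c_eq g_fix]; subst c.
apply: reach_seq (segment j g _ j_lt cB g_fix) _.
move=> c1 hB [h c1_eq [[_ h3 h4] gh]]; subst c1.
have h_fix : fixed_regs C h := fixed_regs_agree g_fix gh.
have [_ h6 _] := h_fix.
set o := [seq i <- iota 0 j | extendable D C r i].
have next_out : [seq i <- iota 0 j.+1 | extendable D C r i] =
    if extendable D C r j then rcons o j else o.
  by rewrite -addn1 iotaD filter_cat /= -cats1; case: extendable; rewrite ?cats0.
have ext : extendable D C r j = (r < h 3) || ((r == h 3) && (0 < h 4)).
  by rewrite /extendable ltn_mul_divmod // h3 h4.
have skip : ~~ extendable D C r j ->
    run (Config (seg_start D j.+1) h o) 0 (filter_inv j.+1).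
  by move=> /negbTE not_ext; apply: reach_now => //; exists h; rewrite // next_out not_ext.
have emit q : q = seg_exit D j + 3 -> extendable D C r j ->
    run (Config q h o) 3 (filter_inv j.+1).
  move=> -> is_ext.
  exec (fetch j 3); exec (fetch j 4); exec (fetch j 5).
  apply: reach_now; first by bounds.
  exists (upd h 9 j); first by rewrite next_out is_ext updE eqxx.
  by case: h_fix => *; split; rewrite updE.
exec_with (fetch j 0) ltac:(rewrite /filter_post).
case: ltnP => [h3_lt | h3_ge].
  by apply: reach_mono (skip _); rewrite // ext; lia.
exec_with (fetch j 1) ltac:(rewrite /filter_post).
case: ltnP => [r_lt | r_ge].
  by apply: reach_mono (emit _ _ _); rewrite // ?ext; lia.
exec_with (fetch j 2) ltac:(rewrite /filter_post h6).
case: ltnP => [h4_lt | h4_ge].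
  by apply: reach_mono (skip _); rewrite // ext; lia.
by apply: reach_mono (emit _ _ _); rewrite // ?ext; lia.
Qed.

Lemma filter_prog_run :
  runs_within (filter_prog D) C r (3 + size D * (5 + 9 * size C + 6))
    (nregs (filter_prog D) * bitlen (reg_bound D C))
    [seq i <- iota 0 (size D) | extendable D C r i].
Proof.
apply: reach_runs_within => //; apply: run_prelude => //.
apply: reach_weaken (reach_iter filter_segment _ _); last 2 first.
- by rewrite /init_regs; bounds.
- by exists (init_regs C).
move=> _ [g -> _]; split=> //.
by rewrite /step (@fetch_fin D (size D) (filter_post D) IHalt).
Qed.

End FilterProgram.

Lemma max_prog_complexity D k : 0 < size D -> 0 < k ->
  exists c, forall C, runs_within (max_prog D k) C 0 (c * k * (size C).+1)
    (c * bitlen (size C)) [:: \max_(i < k) max_power D C i].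
Proof.
move=> D0 k0; set c0 := nregs (max_prog D k) * (bitlen (size D + 3)).+1.
exists (12 + c0) => C; apply: runs_within_mono (max_prog_run C D0 k0).
  by nia.
by apply: space_reg_bound; rewrite leq_addl.
Qed.

Lemma filter_prog_complexity D : 0 < size D ->
  exists c, forall r C, runs_within (filter_prog D) C r (c * size D * (size C).+1)
    (c * (size D * bitlen (size D) + bitlen (size C)))
    [seq i <- iota 0 (size D) | extendable D C r i].
Proof.
move=> D0; set c0 := nregs (filter_prog D) * (bitlen (size D + 3)).+1.
exists (14 + c0) => r C; apply: runs_within_mono (filter_prog_run C r D0).
  by nia.
apply: leq_trans (space_reg_bound _ (leq_addl 14 c0)) _.
by rewrite leq_mul2l leq_addl orbT.
Qed.

Theorem lemma4p2 :
  forall D : seq sym, 0 < size D -> primitive D ->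
  (* (1) *)
  (exists (P : seq instr) (c : nat),
     forall C : seq sym,
       exists R : nat,
         [/\ runs_within P C 0 (c * (size C).+1) (c * bitlen (size C)) [:: R],
             leq_star (spow D R) C &
             forall R', leq_star (spow D R') C -> R' <= R]) /\
  (* (2) *)
  (exists (P : seq instr) (c : nat),
     forall C : seq sym,
       exists R : nat,
         [/\ runs_within P C 0 (c * size D * (size C).+1)
               (c * bitlen (size C)) [:: R],
             (exists2 i, i < size D & leq_star (spow (shift i D) R) C) &
             forall R', (exists2 i, i < size D & leq_star (spow (shift i D) R') C) ->
               R' <= R]) /\
  (* (3) *)
  (exists (P : seq instr) (c : nat),
     forall (r : nat) (C : seq sym),
       exists Gamma : seq nat,
         runs_within P C r (c * size D * (size C).+1)
           (c * (size D * bitlen (size D) + bitlen (size C))) Gamma /\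
         forall i, (i \in Gamma) <->
           (i < size D /\
            leq_star (spow (shift i D) r ++ [:: nth Star D i]) C)).
Proof.
move=> D D0 _; split; [|split].
- have [c run] := max_prog_complexity D0 (ltn0Sn 0).
  exists (max_prog D 1), c => C; exists (\max_(i < 1) max_power D C i).
  have [[[|//] _ attained] bound] := max_power_bigmax C D0 (ltn0Sn 0).
  rewrite rot0 in attained; split=> //; first by move: (run C); rewrite muln1.
  by move=> R' DR; apply: (bound 0); rewrite ?rot0.
- have [c run] := max_prog_complexity D0 D0.
  exists (max_prog D (size D)), c => C; exists (\max_(i < size D) max_power D C i).
  have [attained bound] := max_power_bigmax C D0 D0.
  by split=> // R' [i i_lt]; apply: bound.
- have [c run] := filter_prog_complexity D0.
  exists (filter_prog D), c => r C; exists [seq i <- iota 0 (size D) | extendable D C r i].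
  split=> // i; rewrite mem_filter mem_iota /= add0n.
  split=> [/andP[ext i_lt] | [i_lt]]; rewrite /shift leq_star_spow_rot_cat //.
  by move=> ext; apply/andP.
Qed.
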